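(* Let $X$ be a connected, locally connected, Hausdorff, normal, first countable topological space, $V$ a locally convex topological vector space, and $f:X\to V$ a continuous closed map that has local convexity data and is locally fiber connected. Then (i) the projection $\pi_f:X\to X_f$ is a closed map; (ii) the quotient $X_f$ is a Hausdorff space.
   Context: A subset $C\subset V$ is a cone with vertex $v_0$ if $v_0\in C$ and $(1-\lambda)v_0+\lambda v\in C$ for every $\lambda\ge 0$ and every $v\in C$, $v\ne v_0$; it is a convex cone if it is moreover convex. A continuous map $f:X\to V$ has local convexity data if for each $x\in X$ and every sufficiently small open neighborhood $U_x$ of $x$ there is a convex cone $C_x\subset V$ with vertex $f(x)$, endowed with the subspace topology from $V$, such that (VN) $f(U_x)\subset C_x$ and $f(U_x)$ is a neighborhood of $f(x)$ in $C_x$; and (SLO) $f|_{U_x}:U_x\to C_x$ is an open map, and for every neighborhood $U'_x\subset U_x$ of $x$ the set $f(U'_x)$ is a neighborhood of $f(x)$ in $C_x$. A subset $A\subset X$ satisfies condition (LFC) if for every $a\in A$, the set $A$ does not intersect two different connected components of the fiber $f^{-1}(f(a))$. The map $f$ is locally fiber connected if for every $x\in X$, every open neighborhood of $x$ contains a neighborhood $U_x$ of $x$ satisfying (LFC). Declare $x\sim y$ in $X$ iff $f(x)=f(y)$ and $x,y$ lie in the same connected component of $f^{-1}(f(x))$; $X_f:=X/\!\sim$ with the quotient topology, $\pi_f:X\to X_f$ is the projection and $\tilde f:X_f\to V$ is the unique map with $\tilde f\circ\pi_f=f$. *)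

From HB Require Import structures.
From mathcomp Require Import all_boot all_order all_algebra generic_quotient.
From mathcomp Require Import all_classical all_reals all_analysis.
Set Implicit Arguments. Unset Strict Implicit. Unset Printing Implicit Defensive.
Import Order.TTheory GRing.Theory Num.Theory.
Local Open Scope classical_set_scope.
Local Open Scope ring_scope.
Local Open Scope quotient_scope.

Definition closed_map (S T : topologicalType) (g : S -> T) : Prop :=
  forall C : set S, closed C -> closed (g @` C).

Definition connected_space (T : topologicalType) : Prop := connected [set: T].

Definition locally_connected_space (T : topologicalType) : Prop :=
  forall (x : T) (N : set T), nbhs x N ->
    exists U : set T, [/\ open U, U x, connected U & U `<=` N].

Definition first_countable_space (T : topologicalType) : Prop :=
  forall x : T, exists B : set_system T,
    [/\ countable B, (forall N, B N -> nbhs x N) &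
        (forall N, nbhs x N -> exists2 M, B M & M `<=` N)].

Definition open_in (T : topologicalType) (C S : set T) : Prop :=
  exists G : set T, open G /\ S = G `&` C.

Definition nbhs_in (T : topologicalType) (C : set T) (p : T) (S : set T) : Prop :=
  exists G : set T, [/\ open G, G p & G `&` C `<=` S].

Definition cone_with_vertex (R : numDomainType) (V : lmodType R)
    (C : set V) (v0 : V) : Prop :=
  C v0 /\ forall (lambda : R) (v : V), 0 <= lambda -> C v -> v <> v0 ->
            C ((1 - lambda) *: v0 + lambda *: v).

Definition convex_cone_with_vertex (R : numDomainType) (V : lmodType R)
    (C : set V) (v0 : V) : Prop :=
  cone_with_vertex C v0 /\ @convex_set R V C.

Definition local_convexity_data (R : numDomainType) (X : topologicalType)
    (V : tvsType R) (f : X -> V) : Prop :=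
  forall x : X, exists2 W : set X, nbhs x W &
    forall U : set X, open U -> U x -> U `<=` W ->
      exists C : set V,
        [/\ convex_cone_with_vertex C (f x),
            f @` U `<=` C, nbhs_in C (f x) (f @` U),
            (* (SLO): f|_U : U -> C is open (U carries the subspace topology) *)
            (forall O : set X, open_in U O -> open_in C (f @` O)) &
            (forall U' : set X, nbhs x U' -> U' `<=` U ->
               nbhs_in C (f x) (f @` U'))].

Definition fiber (X V : Type) (f : X -> V) (x : X) : set X := f @^-1` [set f x].

Definition LFC (X : topologicalType) (V : Type) (f : X -> V) (A : set X) : Prop :=
  forall a : X, A a ->
    forall y z : X, A y -> A z -> fiber f a y -> fiber f a z ->
      connected_component (fiber f a) y = connected_component (fiber f a) z.

Definition locally_fiber_connected (X : topologicalType) (V : Type)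
    (f : X -> V) : Prop :=
  forall (x : X) (O : set X), open O -> O x ->
    exists U : set X, [/\ nbhs x U, U `<=` O & LFC f U].

Definition fib_rel (X : topologicalType) (V : Type) (f : X -> V) (x y : X) : Prop :=
  f x = f y /\ connected_component (fiber f x) x y.

Definition fib_relb (X : topologicalType) (V : Type) (f : X -> V) : rel X :=
  fun x y => `[< fib_rel f x y >].

Lemma fib_relb_refl (X : topologicalType) (V : Type) (f : X -> V) :
  reflexive (fib_relb f).
Proof. by move=> x; apply/asboolP; split => //; exact: connected_component_refl. Qed.

Lemma fib_relb_sym (X : topologicalType) (V : Type) (f : X -> V) :
  symmetric (fib_relb f).
Proof.
suff H : forall x y, fib_relb f x y -> fib_relb f y x.
  by move=> x y; apply/idP/idP; apply: H.
move=> x y /asboolP [fxy cxy]; apply/asboolP; split; first by [].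
have -> : fiber f y = fiber f x by rewrite /fiber fxy.
exact: connected_component_sym.
Qed.

Lemma fib_relb_trans (X : topologicalType) (V : Type) (f : X -> V) :
  transitive (fib_relb f).
Proof.
move=> y x z /asboolP [fxy cxy] /asboolP [fyz cyz]; apply/asboolP.
split; first by rewrite fxy.
have E : fiber f y = fiber f x by rewrite /fiber fxy.
rewrite E in cyz; exact: connected_component_trans cxy cyz.
Qed.

Definition fib_equiv (X : topologicalType) (V : Type) (f : X -> V) : equiv_rel X :=
  EquivRel (fib_relb f) (@fib_relb_refl X V f) (@fib_relb_sym X V f)
    (@fib_relb_trans X V f).

Definition Xf (X : topologicalType) (V : Type) (f : X -> V) : topologicalType :=
  quotient_topology {eq_quot (fib_equiv f)}.

Definition pi_f (X : topologicalType) (V : Type) (f : X -> V) : X -> Xf f :=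
  \pi_(quotient_topology {eq_quot (fib_equiv f)}).

From HB Require Import structures.
From mathcomp Require Import all_boot all_order all_algebra generic_quotient.
From mathcomp Require Import all_classical all_reals all_analysis.
Local Open Scope classical_set_scope.
Local Open Scope quotient_scope.
Set Implicit Arguments. Unset Strict Implicit.

(* The classes of ~ are the connected components K x of the fibres.  Local
   fibre connectedness makes K x relatively open in its fibre, so both K x and
   the rest of the fibre are closed in X, and normality separates them by
   disjoint open sets G1, G2.  As f is closed, some tube f^-1(N) around the
   fibre lies in G1 u G2, and f^-1(N) n G1 is then a saturated open
   neighbourhood of K x: a component meeting it is a connected subset of
   G1 u G2 and cannot leave G1.  Hence every component has a basis of
   saturated open neighbourhoods, which yields at once that pi_f is closed and,
   separating two distinct (closed) components by normality, that X_f is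
   Hausdorff. *)

Lemma open_disjoint_separated (T : topologicalType) (A B : set T) :
  open A -> open B -> A `&` B = set0 -> separated A B.
Proof.
move=> oA oB AB0; split; rewrite -subset0.
- move=> p [clAp Bp]; have [z [Az Bz]] := clAp B (open_nbhs_nbhs (conj oB Bp)).
  by suff : (A `&` B) z by rewrite AB0.
- move=> p [Ap clBp]; have [z [Bz Az]] := clBp A (open_nbhs_nbhs (conj oA Ap)).
  by suff : (A `&` B) z by rewrite AB0.
Qed.

Lemma closed_map_tube (S T : topologicalType) (g : S -> T) (O : set S) (t : T) :
  closed_map g -> open O -> g @^-1` [set t] `<=` O ->
  exists N : set T, [/\ open N, N t & g @^-1` N `<=` O].
Proof.
move=> cg oO tO; exists (~` (g @` ~` O)); split.
- exact/closed_openC/cg/open_closedC.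
- by move=> [s nOs gst]; apply/nOs/tO.
- by move=> s /= nOs; apply: contrapT => Os; apply: nOs; exists s.
Qed.

Section fibre_components.
Context (X V : topologicalType) (f : X -> V).

Local Notation K x := (connected_component (fiber f x) x).

Lemma component_fiber x y : K x y -> fiber f y = fiber f x.
Proof. by move=> /connected_component_sub fyx; rewrite /fiber fyx. Qed.

Lemma componentE x y : K x y -> K y = K x.
Proof.
move=> Kxy; rewrite (component_fiber Kxy).
exact/esym/same_connected_component.
Qed.

Lemma component_sym x y : K x y -> K y x.
Proof. by move=> Kxy; rewrite (componentE Kxy); exact: connected_component_refl. Qed.

Lemma pi_f_eqP x y : pi_f f x = pi_f f y <-> K x y.
Proof.
have /(_ {eq_quot (fib_equiv f)} x y) piP := @eqquotP _ (fib_equiv f).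
split=> [/piP/asboolP [] //|Kxy]; apply/piP/asboolP; split=> //.
exact/esym/(connected_component_sub Kxy).
Qed.

Lemma pi_f_surj (p : Xf f) : exists a, pi_f f a = p.
Proof. by exists (repr p); rewrite /pi_f reprK. Qed.

Definition fib_saturated (W : set X) := forall y z, W y -> K y z -> W z.

Lemma open_pi_f_image (W : set X) :
  open W -> fib_saturated W -> open (pi_f f @` W).
Proof.
move=> oW sW; change (open (pi_f f @^-1` (pi_f f @` W))).
suff -> : pi_f f @^-1` (pi_f f @` W) = W by [].
apply/seteqP; split=> [y [w Ww /pi_f_eqP]|y Wy]; last by exists y.
exact: sW.
Qed.

Lemma closed_fiber x :
  accessible_space X -> continuous f -> closed_map f -> closed (fiber f x).
Proof.
move=> aX cf clf; apply: preimage_closed => [y _|]; first exact: cf.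
by rewrite -image_set1; apply/clf/accessible_closed_set1.
Qed.

Lemma closed_fiberD_component x : locally_fiber_connected f ->
  closed (fiber f x) -> closed (fiber f x `\` K x).
Proof.
move=> lfc clF p clp.
have Fp : fiber f x p by apply/clF/(closureS _ clp) => y [].
have [U [nU _ LU]] := lfc p _ openT I.
have [z [[Fz nKz] Uz]] := clp U nU.
have Up : U p := nbhs_singleton nU.
have Fpz : fiber f p z by rewrite /fiber /= Fz -Fp.
have Kpz : K p z by rewrite (LU p Up p z) //; exact: connected_component_refl.
by split=> // Kxp; apply: nKz; rewrite -(componentE Kxp).
Qed.

Lemma saturated_tube_part (G1 G2 : set X) (N : set V) :
  open G1 -> open G2 -> G1 `&` G2 = set0 -> f @^-1` N `<=` G1 `|` G2 ->
  fib_saturated (f @^-1` N `&` G1).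
Proof.
move=> oG1 oG2 G12 NG y z [Ny G1y] Kyz.
have KG : K y `<=` G1 `|` G2.
  by move=> w /connected_component_sub fw; apply: NG; rewrite /= fw.
split; first by rewrite /= (connected_component_sub Kyz).
have Kyy : K y y by exact: connected_component_refl.
have [KG1|KG2] := connected_subset (open_disjoint_separated oG1 oG2 G12) KG
  (@component_connected _ _ _); first exact: KG1.
suff : (G1 `&` G2) y by rewrite G12.
by split=> //; exact: KG2.
Qed.

End fibre_components.

Section saturated_neighbourhoods.
(* [normal_openP] is derived from Urysohn's lemma, hence its real type. *)
Variable R : realType.
Context (X V : topologicalType) (f : X -> V).
Hypotheses (aX : accessible_space X) (nX : normal_space X) (cf : continuous f)
  (clf : closed_map f) (lfc : locally_fiber_connected f).

Local Notation K x := (connected_component (fiber f x) x).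

Lemma closed_component x : closed (K x).
Proof. exact/component_closed/closed_fiber. Qed.

Lemma saturated_open_nbhs x (P : set X) : open P -> K x `<=` P ->
  exists W : set X, [/\ open W, W x, W `<=` P & fib_saturated f W].
Proof.
move=> oP KP.
have KFK0 : K x `&` (fiber f x `\` K x) = set0.
  by rewrite -subset0 => y [Ky [_ nKy]].
have [G1 [G2 [oG1 oG2 KG1 FG2 G12]]] := (@normal_openP R X).1 nX _ _
  (closed_component (x:=x)) (closed_fiberD_component lfc (closed_fiber aX cf clf)) KFK0.
have G1PG2 : (G1 `&` P) `&` G2 = set0.
  by rewrite -subset0 => y [[G1y _] G2y]; rewrite -G12.
have FG : fiber f x `<=` (G1 `&` P) `|` G2.
  move=> y Fy; have [Ky|nKy] := pselect (K x y); last by right; apply: FG2.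
  by left; split; [apply: KG1 | apply: KP].
have [N [oN Nfx NG]] := closed_map_tube clf (openU (openI oG1 oP) oG2) FG.
have Kxx : K x x by exact: connected_component_refl.
exists (f @^-1` N `&` (G1 `&` P)); split.
- by apply: openI; [apply: open_comp => // y _; apply: cf | apply: openI].
- by split=> //; split; [apply: KG1 | apply: KP].
- by move=> y [_ []].
- exact: saturated_tube_part (openI oG1 oP) oG2 G1PG2 NG.
Qed.

Lemma pi_f_closed_map : closed_map (pi_f f).
Proof.
move=> C clC; rewrite -[pi_f f @` C]setCK closedC.
change (open (pi_f f @^-1` ~` (pi_f f @` C))); rewrite openE => x nCx.
have KC : K x `<=` ~` C.
  by move=> y Kxy Cy; apply: nCx; exists y => //; exact/pi_f_eqP/component_sym.
have [W [oW Wx WC sW]] := saturated_open_nbhs (closed_openC clC) KC.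
apply: (@filterS _ _ _ W); last exact: open_nbhs_nbhs.
by move=> y Wy [c Cc /pi_f_eqP/component_sym Kyc]; apply: (WC c (sW y c Wy Kyc)).
Qed.

Lemma Xf_hausdorff : hausdorff_space (Xf f).
Proof.
rewrite open_hausdorff => p q.
have [a <-] := pi_f_surj p; have [b <-] := pi_f_surj q => pq.
have Kab0 : K a `&` K b = set0.
  rewrite -subset0 => z [Kaz Kbz]; move/eqP: pq; apply; apply/pi_f_eqP.
  rewrite -(componentE Kaz) (componentE Kbz).
  exact: connected_component_refl.
have [Pa [Pb [oPa oPb KPa KPb Pab0]]] := (@normal_openP R X).1 nX _ _
  (closed_component (x:=a)) (closed_component (x:=b)) Kab0.
have [Wa [oWa Waa WPa sWa]] := saturated_open_nbhs oPa KPa.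
have [Wb [oWb Wbb WPb sWb]] := saturated_open_nbhs oPb KPb.
exists (pi_f f @` Wa, pi_f f @` Wb).
  by split; rewrite inE; [exists a | exists b].
split; [exact: open_pi_f_image | exact: open_pi_f_image |].
apply/eqP; rewrite -subset0 => r [[y Way yr] [z Wbz]]; rewrite -yr => /pi_f_eqP Kzy.
suff : (Pa `&` Pb) y by rewrite Pab0.
by split; [apply: WPa | apply/WPb/(sWb z)].
Qed.

End saturated_neighbourhoods.

Theorem lemma2p20 (R : realType) (X : topologicalType) (V : tvsType R)
    (f : X -> V) :
  connected_space X -> locally_connected_space X -> hausdorff_space X ->
  normal_space X -> first_countable_space X ->
  continuous f -> closed_map f ->
  local_convexity_data f -> locally_fiber_connected f ->
  closed_map (pi_f f) /\ hausdorff_space (Xf f).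
Proof.
move=> _ _ /hausdorff_accessible aX nX _ cf clf _ lfc.
by split; [exact: (pi_f_closed_map R) | exact: (Xf_hausdorff R)].
Qed.
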